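(* Let $G,H$ be locally compact second countable compactly generated groups, $\varphi\colon\mathbb{R}_+\to\mathbb{R}_+$ a map, $G\curvearrowright(X,\nu)$ a free probability measure-preserving action on a standard probability space, and $c\colon G\times X\to H$ a $\varphi$-integrable $H$-valued cocycle. Then there exist a measurable subset $A\subset G$ and a sequence $(K_n)_{n\ge1}$ of positive integers such that: $\lambda_G(A)>0$ and $A$ contains a countable dense subset of $G$; $K_n\to+\infty$; and for every $g\in A$ the series $\sum_{n\ge1}K_n\,\varphi(n)\,\nu(\{x: |c(g,x)|_H=n\})$ converges.
   Context: An $H$-valued cocycle is a measurable $c\colon G\times X\to H$ with $c(g_1g_2,x)=c(g_1,g_2\cdot x)c(g_2,x)$. $|\cdot|_H$ is the (integer-valued) word length on $H$ for a compact generating set; $\lambda_G$ is a Haar measure; $c$ is $\varphi$-integrable if $\sup_{g\in S_G}\int_X\varphi(|c(g,x)|_H)\,d\nu(x)<\infty$ for a compact generating set $S_G$ of $G$ (and in particular $\int_X\varphi(|c(g,x)|_H)d\nu(x)<\infty$ for every $g\in G$). *)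

From HB Require Import structures.
From mathcomp Require Import all_boot all_order all_algebra.
From mathcomp Require Import all_classical all_reals all_analysis.
Set Implicit Arguments. Unset Strict Implicit. Unset Printing Implicit Defensive.
Import Order.TTheory GRing.Theory Num.Theory.
Local Open Scope classical_set_scope.
Local Open Scope ring_scope.

Notation borelT T := (g_sigma_algebraType (@open T)).

Definition is_group (G : Type) (mul : G -> G -> G) (inv : G -> G) (e : G) :=
  [/\ forall x y z, mul x (mul y z) = mul (mul x y) z,
      forall x, mul e x = x, forall x, mul x e = x,
      forall x, mul (inv x) x = e & forall x, mul x (inv x) = e].

Inductive in_word (G : Type) (mul : G -> G -> G) (inv : G -> G) (e : G)
    (S : set G) : nat -> G -> Prop :=
  | in_word0 : in_word mul inv e S 0 e
  | in_wordS n s g : (S s \/ S (inv s)) -> in_word mul inv e S n g ->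
      in_word mul inv e S n.+1 (mul s g).

Definition generates (G : Type) (mul : G -> G -> G) (inv : G -> G) (e : G)
    (S : set G) := forall g, exists n, in_word mul inv e S n g.

(** Word length |g|_S := min { n | g ∈ (S ∪ S^{-1})^n } (0 if no such n,
    which never happens when S generates G). *)
Definition word_length (G : Type) (mul : G -> G -> G) (inv : G -> G) (e : G)
    (S : set G) (g : G) : nat :=
  match pselect (exists n, in_word mul inv e S n g) with
  | left P => ex_minn (P := fun n => `[< in_word mul inv e S n g >])
      (let: ex_intro n Hn := P in ex_intro _ n (asboolT Hn))
  | right _ => 0%N
  end.

Definition lcsc_cg_group (G : ptopologicalType) (mul : G -> G -> G)
    (inv : G -> G) (e : G) :=
  is_group mul inv e /\
  continuous (fun p : G * G => mul p.1 p.2) /\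
  continuous inv /\
  hausdorff_space G /\
  locally_compact [set: G] /\
  @second_countable G /\
  exists S : set G, compact S /\ generates mul inv e S.

Definition left_Haar (R : realType) (G : ptopologicalType) (mul : G -> G -> G)
    (lam : set (borelT G) -> \bar R) :=
  [/\ forall (g : G) (A : set (borelT G)), measurable A ->
        lam [set mul g a | a in A] = lam A,
      forall K : set G, compact K -> (lam K < +oo)%E &
      forall U : set G, open U -> U !=set0 -> (0 < lam U)%E].

(** Standard probability space: the Borel sigma-algebra of a Polish space
    (here given by a complete separable metric). *)
Definition polish_space (R : realType) (X : completePseudoMetricType R) :=
  hausdorff_space X /\ @second_countable X.

Definition free_pmp_action (R : realType) (G : ptopologicalType)
    (mul : G -> G -> G) (e : G) (X : ptopologicalType)
    (nu : probability (borelT X) R) (act : G -> X -> X) :=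
  [/\ forall x, act e x = x,
      forall g h x, act (mul g h) x = act g (act h x),
      measurable_fun [set: borelT G * borelT X] (fun p => (act p.1 p.2 : borelT X)),
      forall (g : G) (B : set (borelT X)), measurable B ->
        nu (act g @^-1` B) = nu B &
      forall g x, act g x = x -> g = e].

Definition cocycle (G : ptopologicalType) (mulG : G -> G -> G)
    (X : ptopologicalType) (act : G -> X -> X)
    (H : ptopologicalType) (mulH : H -> H -> H) (c : G -> X -> H) :=
  measurable_fun [set: borelT G * borelT X] (fun p => (c p.1 p.2 : borelT H)) /\
  forall g1 g2 x, c (mulG g1 g2) x = mulH (c g1 (act g2 x)) (c g2 x).

Definition phi_integrable (R : realType) (G : ptopologicalType)
    (mulG : G -> G -> G) (invG : G -> G) (eG : G) (X : ptopologicalType)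
    (nu : probability (borelT X) R) (H : ptopologicalType)
    (mulH : H -> H -> H) (invH : H -> H) (eH : H) (SH : set H)
    (phi : R -> R) (c : G -> X -> H) :=
  (exists SG : set G, compact SG /\ generates mulG invG eG SG /\
     (ereal_sup [set (\int[nu]_x
        (phi (word_length mulH invH eH SH (c g x))%:R)%:E)%E | g in SG]
        < +oo)%E) /\
  forall g : G,
    (\int[nu]_x (phi (word_length mulH invH eH SH (c g x))%:R)%:E < +oo)%E.

From HB Require Import structures.
From mathcomp Require Import all_boot all_order all_algebra.
From mathcomp Require Import all_classical all_reals all_analysis measurable_realfun.
Import Order.TTheory GRing.Theory Num.Theory.
Local Open Scope classical_set_scope.
Local Open Scope ring_scope.
Set Implicit Arguments. Unset Strict Implicit. Unset Printing Implicit Defensive.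

(* The terms a_n(g) = phi(n) nu(|c(g,.)|_H = n) are summable for every g: their sum
   is the integral of phi(|c(g,.)|_H), finite by phi-integrability.  Hence the tails
   t_N(g) = sum_{n >= N} a_n(g) decrease to 0 pointwise, and an Egorov-type argument
   on a set K0 of finite positive Haar measure yields cutoffs N_j with
   t_{N_j} <= 2^-(j+1) for all j outside a set of measure < lam(K0)/2, and for
   all j >= k at the k-th point of a fixed dense sequence.  The weights
   K_n = 1 + #{j < n | N_j <= n} tend to infinity since every cutoff is eventually
   passed, and sum_n K_n a_n <= sum_n a_n + sum_j t_{N_j}, which is finite on the
   remaining part of K0 and on the dense sequence. *)

Lemma open_borel_measurable (T : ptopologicalType) (A : set T) :
  open A -> measurable (A : set (borelT T)).
Proof. exact: sub_sigma_algebra. Qed.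

Lemma closed_borel_measurable (T : ptopologicalType) (A : set T) :
  closed A -> measurable (A : set (borelT T)).
Proof.
move=> cA; rewrite -[A]setCK; apply: measurableC.
by apply: open_borel_measurable; exact: closed_openC.
Qed.

Lemma measurable_range_seq (T : ptopologicalType) (u : nat -> T) :
  hausdorff_space T -> measurable (range u : set (borelT T)).
Proof.
move=> hT; have -> : range u = \bigcup_k [set u k].
  by apply/seteqP; split=> x [k _ ukx]; exists k.
apply: bigcupT_measurable => k; apply: closed_borel_measurable.
by apply: compact_closed => //; exact: compact_set1.
Qed.

Lemma second_countable_dense_seq (T : ptopologicalType) :
  @second_countable T -> exists u : nat -> T, dense (range u).
Proof.
move=> [B cB [_ Bnbhs]].
have [b bsurj] : exists b : nat -> set T, set_surj setT B b by apply/pcard_surjP.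
exists (fun k => xget point (b k)) => O [x Ox] oO.
have [U [BU Ux] UO] := Bnbhs x O (open_nbhs_nbhs (conj oO Ox)).
have [k _ bkU] := bsurj U BU.
exists (xget point (b k)); split; last by exists k.
by apply: UO; rewrite -bkU; apply: xgetPex; exists x; rewrite bkU.
Qed.

Section word_length.
Variables (H : ptopologicalType) (mul : H -> H -> H) (inv : H -> H) (e : H).
Hypothesis group_H : is_group mul inv e.

Lemma is_group_invK : involutive inv.
Proof.
case: group_H => mulA mul1g mulg1 mulVg mulgV x.
by rewrite -[inv (inv x)]mulg1 -(mulVg x) mulA mulVg mul1g.
Qed.

Lemma compact_in_word (S : set H) n :
  continuous (fun p : H * H => mul p.1 p.2) -> continuous inv -> compact S ->
  compact [set g | in_word mul inv e S n g].
Proof.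
move=> cmul cinv cS.
have cSV : compact [set s | S s \/ S (inv s)].
  have -> : [set s | S s \/ S (inv s)] = S `|` inv @` S.
    apply/seteqP; split=> s /=.
      by case=> [|Sis]; [left|right; exists (inv s); rewrite ?is_group_invK].
    by case=> [|[t St <-]]; [left|right; rewrite is_group_invK].
  by apply: compactU => //; apply: continuous_compact => //; exact: continuous_subspaceT.
elim: n => [|n IHn].
  have -> : [set g | in_word mul inv e S 0 g] = [set e].
    by apply/seteqP; split=> g /=; [move=> h; inversion h|move=> ->; constructor].
  exact: compact_set1.
have -> : [set g | in_word mul inv e S n.+1 g] = (fun p : H * H => mul p.1 p.2) @`
    ([set s | S s \/ S (inv s)] `*` [set g | in_word mul inv e S n g]).
  apply/seteqP; split=> g /=; first by move=> h; inversion h; exists (s, g0).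
  by case=> -[s h] [/= Ss Wh] <-; constructor.
by apply: continuous_compact; [exact: continuous_subspaceT|exact: compact_setX].
Qed.

Lemma word_length_eqE (S : set H) n : generates mul inv e S ->
  [set h | word_length mul inv e S h = n] =
  [set g | in_word mul inv e S n g] `&`
    \bigcap_(m in `I_n) ~` [set g | in_word mul inv e S m g].
Proof.
move=> genS; apply/seteqP; split=> h /=; rewrite /word_length;
  (case: pselect => [P|]; last by move=> []; exact: genS).
  case: ex_minnP => m /asboolP Wm minm <-; split => // k /= km Wk.
  by have := minm k (asboolT Wk); rewrite leqNgt km.
move=> [Wn Wlt]; case: ex_minnP => m /asboolP Wm minm.
apply/eqP; rewrite eqn_leq minm ?andbT; last exact: asboolT.
by rewrite leqNgt; apply/negP => mn; exact: (Wlt m mn).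
Qed.

End word_length.

Lemma measurable_word_length_eq (H : ptopologicalType) (mul : H -> H -> H)
    (inv : H -> H) (e : H) (S : set H) n :
  lcsc_cg_group mul inv e -> compact S -> generates mul inv e S ->
  measurable ([set h | word_length mul inv e S h = n] : set (borelT H)).
Proof.
move=> [grp [cmul [cinv [hH _]]]] cS genS; rewrite word_length_eqE //.
have Wm m : measurable ([set g | in_word mul inv e S m g] : set (borelT H)).
  apply: closed_borel_measurable; apply: compact_closed => //.
  exact: compact_in_word.
by apply: measurableI => //; apply: bigcap_measurableType => m _; exact: measurableC.
Qed.

Lemma integral_comp_nat d (T : measurableType d) (R : realType)
    (mu : {measure set T -> \bar R}) (w : T -> nat) (f : nat -> R) :
  (forall n, 0 <= f n) -> (forall n, measurable [set x | w x = n]) ->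
  (\int[mu]_x (f (w x))%:E = \sum_(n <oo) (f n)%:E * mu [set x | w x = n])%E.
Proof.
move=> f0 mw.
have partition : setT = \bigcup_n [set x | w x = n].
  by apply/seteqP; split=> x // _; exists (w x).
have mfw : measurable_fun setT (fun x => (f (w x))%:E).
  move=> _ Y mY; rewrite setTI.
  have -> : (fun x => (f (w x))%:E) @^-1` Y =
      \bigcup_(n in [set n | Y (f n)%:E]) [set x | w x = n].
    by apply/seteqP; split=> x /=; [exists (w x)|move=> [n Yn /= ->]].
  exact: bigcup_measurable.
rewrite partition ge0_integral_bigcup //=; first last.
- by move=> m n _ _ [x [/= <- <-]].
- by move=> x _; rewrite lee_fin.
- by rewrite -partition.
apply: eq_eseriesr => n _; rewrite -integral_cst //.
by apply: eq_integral => x /[!inE] /= ->.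
Qed.

Definition passed_cutoffs (N : nat -> nat) (n : nat) : nat :=
  (\sum_(0 <= j < n | N j <= n) 1)%N.

Lemma passed_cutoffs_cvgy (R : realType) (N : nat -> nat) :
  ((passed_cutoffs N n)%:R : R) @[n --> \oo] --> +oo.
Proof.
apply/cvgrnyP/cvgnyPge => A.
exists (maxn A.+1 (\max_(j < A.+1) N j)) => // n /=.
rewrite geq_max => /andP[An Nn].
rewrite /passed_cutoffs (@big_cat_nat _ _ _ A.+1 0 n _ _ (leq0n _) An) /=.
apply: leq_trans (leq_addr _ _).
rewrite big_nat_cond (eq_bigl (fun j => 0 <= j < A.+1)%N) -?big_nat.
  by rewrite sum_nat_const_nat muln1 subn0.
move=> j /=; case jA: (j < A.+1)%N => //=.
by rewrite (leq_trans _ Nn) // (leq_bigmax (Ordinal jA)).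
Qed.

Section passed_cutoffs_series.
Context (R : realType) (a : nat -> \bar R) (N : nat -> nat).
Hypothesis a_ge0 : forall n, (0 <= a n)%E.
Local Open Scope ereal_scope.

Let tail_ge0 j : 0 <= \sum_(N j <= n <oo) a n.
Proof. exact: nneseries_ge0. Qed.

Lemma nneseries_passed_cutoffs_le :
  \sum_(0 <= n <oo) (passed_cutoffs N n)%:R%:E * a n <=
  \sum_(0 <= j <oo) \sum_(N j <= n <oo) a n.
Proof.
apply: lime_le; first by apply: is_cvg_nneseries => n _ _; rewrite mule_ge0.
apply: nearW => M; apply: le_trans (nneseries_lim_ge M (fun j _ _ => tail_ge0 j)).
apply: (@le_trans _ _ (\sum_(0 <= j < M) \sum_(N j <= n < M) a n)); last first.
  by apply: lee_sum => j _; exact: nneseries_lim_ge.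
apply: (@le_trans _ _ (\sum_(0 <= n < M) \sum_(0 <= j < M | (N j <= n)%N) a n)).
  rewrite big_nat [leRHS]big_nat; apply: lee_sum => n /andP[_ nM].
  rewrite /passed_cutoffs natr_sum -sumEFin ge0_sume_distrl; last by move=> j _.
  rewrite (eq_bigr (fun=> a n)); last by move=> j _; rewrite mul1e.
  rewrite (big_nat_widen _ _ _ _ _ (ltnW nM)).
  by apply: lee_sum_nneg_subset => [j /andP[]|j _].
rewrite (exchange_big_dep_nat xpredT) //; apply: lee_sum => j _.
by rewrite [leRHS](@big_nat_widenl _ _ _ _ 0).
Qed.

Lemma nneseries_tails_lty :
  \sum_(0 <= n <oo) a n < +oo ->
  (exists j0, forall j, (j0 <= j)%N ->
     \sum_(N j <= n <oo) a n <= (1 / (2 ^ j.+1)%:R)%:E) ->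
  \sum_(0 <= j <oo) \sum_(N j <= n <oo) a n < +oo.
Proof.
move=> a_fin [j0 tail_small].
rewrite (nneseries_split 0 j0) // add0n; apply: lte_add_pinfty.
  apply: lte_sum_pinfty => j _; apply: le_lt_trans a_fin.
  by rewrite (nneseries_split 0 (N j)) // add0n leeDr // sume_ge0.
apply: le_lt_trans (ltry 1); rewrite eseries_cond.
apply: le_trans (epsilon_trick0 _ ler01).
by apply: lee_nneseries => [j _ _|j /= /tail_small].
Qed.

Lemma nneseries_passed_cutoffs_lty :
  \sum_(0 <= n <oo) a n < +oo ->
  (exists j0, forall j, (j0 <= j)%N ->
     \sum_(N j <= n <oo) a n <= (1 / (2 ^ j.+1)%:R)%:E) ->
  \sum_(0 <= n <oo) (passed_cutoffs N n).+1%:R%:E * a n < +oo.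
Proof.
move=> a_fin tail_small.
rewrite (eq_eseriesr (g := fun n => a n + (passed_cutoffs N n)%:R%:E * a n)); last first.
  by move=> n _; rewrite -addn1 natrD EFinD ge0_muleDl // mul1e addeC.
rewrite nneseriesD // => [|n _ _]; last by rewrite mule_ge0.
apply: lte_add_pinfty => //.
apply: le_lt_trans nneseries_passed_cutoffs_le _.
exact: nneseries_tails_lty.
Qed.

End passed_cutoffs_series.

Lemma measure_superlevel_cvg0 d (T : measurableType d) (R : realType)
    (mu : {measure set T -> \bar R}) (f : nat -> T -> \bar R) (A : set T) (eps : R) :
  measurable A -> (mu A < +oo)%E -> (forall N, measurable_fun setT (f N)) ->
  (forall x N M, (N <= M)%N -> (f M x <= f N x)%E) ->
  (forall x, f N x @[N --> \oo] --> 0%E) -> 0 < eps ->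
  mu (A `&` [set x | (eps%:E < f N x)%E]) @[N --> \oo] --> 0%E.
Proof.
move=> mA muA mf f_noninc f_cvg0 eps0.
pose U N := A `&` [set x | (eps%:E < f N x)%E].
have mU N : measurable (U N).
  by apply: emeasurable_fun_o_infty => //; exact: measurable_funS (mf N).
have U_bigcap0 : \bigcap_N U N = set0.
  have eps0E : (0 < eps%:E)%E by rewrite lte_fin.
  apply/seteqP; split => // x /= Ux.
  have [N _ fN] := f_cvg0 x _ (open_ereal_lt' eps0E).
  by have [_ /=] := Ux N I; rewrite ltNge => /negP; apply; apply/ltW/fN => /=.
rewrite -(measure0 mu) -U_bigcap0; apply: nonincreasing_cvg_mu => //.
- apply: (le_lt_trans _ muA); apply: le_measure; rewrite ?inE //; exact: (mU 0%N).
- by apply: bigcapT_measurable => N; exact: mU.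
- move=> N M NM; apply/subsetPset => x [Ax /= fx].
  by split => //=; apply: lt_le_trans fx (f_noninc _ _ _ NM).
Qed.

Lemma measureD_gt0 d (T : measurableType d) (R : realType)
    (mu : {measure set T -> \bar R}) (A B : set T) :
  measurable A -> measurable B -> (mu A < +oo)%E -> (mu B < mu A)%E ->
  (0 < mu (A `\` B))%E.
Proof.
move=> mA mB muA muBA; rewrite measureD // sube_gt0; apply: le_lt_trans muBA.
by apply: le_measure; rewrite ?inE //; exact: measurableI.
Qed.

Section cutoffs.
Context d (T : measurableType d) (R : realType) (lam : {measure set T -> \bar R}).
Variables (a : nat -> T -> \bar R) (u : nat -> T).
Hypotheses (a_ge0 : forall n x, (0 <= a n x)%E)
  (a_meas : forall n, measurable_fun setT (a n))
  (a_fin : forall x, (\sum_(0 <= n <oo) a n x < +oo)%E).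
Local Open Scope ereal_scope.

Let tail N x := \sum_(N <= n <oo) a n x.

Let measurable_tail N : measurable_fun setT (tail N).
Proof.
have -> : tail N = fun x => \sum_(n <oo | n \in [pred n | (N <= n)%N]) a n x.
  by apply/funext => x; rewrite /tail eseries_cond.
exact: ge0_emeasurable_sum.
Qed.

Let tail_nonincreasing x N M : (N <= M)%N -> tail M x <= tail N x.
Proof.
move=> NM; rewrite /tail (nneseries_split N (M - N)) // subnKC //.
by rewrite leeDr // sume_ge0.
Qed.

Let tail_cvg0 x : tail N x @[N --> \oo] --> 0.
Proof. exact: nneseries_tail_cvg. Qed.

Lemma exists_cutoff (A : set T) (eps delta : R) j :
  measurable A -> lam A < +oo -> (0 < eps)%R -> (0 < delta)%R ->
  exists N, lam (A `&` [set x | eps%:E < tail N x]) < delta%:E /\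
    forall k, (k <= j)%N -> tail N (u k) <= eps%:E.
Proof.
move=> mA lamA eps0 delta0.
have small_measure : \forall N \near \oo,
    lam (A `&` [set x | eps%:E < tail N x]) < delta%:E.
  have delta0E : 0 < delta%:E by rewrite lte_fin.
  exact: (measure_superlevel_cvg0 mA lamA measurable_tail tail_nonincreasing
    tail_cvg0 eps0 (open_ereal_lt' delta0E)).
have small_tails : \forall N \near \oo, forall k : 'I_j.+1, tail N (u k) < eps%:E.
  have eps0E : 0 < eps%:E by rewrite lte_fin.
  by apply: filter_forall => k; exact: (tail_cvg0 (u k) (open_ereal_lt' eps0E)).
have [N [lamN tailN]] := filter_ex (filterI small_measure small_tails).
by exists N; split => // k kj; exact/ltW/(tailN (Ordinal (kj : (k < j.+1)%N))).
Qed.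

Lemma exists_cutoffs (A : set T) :
  measurable A -> 0 < lam A -> lam A < +oo -> measurable (range u) ->
  exists (B : set T) (N : nat -> nat), [/\ measurable B, 0 < lam B, range u `<=` B &
    forall x, B x -> exists j0, forall j, (j0 <= j)%N ->
      tail (N j) x <= (1 / (2 ^ j.+1)%:R)%R%:E].
Proof.
move=> mA lamA_gt0 lamA_lty mrange.
have [r r_gt0 lamAE] : exists2 r : R, (0 < r)%R & lam A = r%:E.
  by move: lamA_gt0 lamA_lty; case: (lam A) => // r r_gt0 _; exists r.
pose e j : R := (1 / (2 ^ j.+1)%:R)%R.
pose delta j : R := (r / 2 / (2 ^ j.+1)%:R)%R.
have e_gt0 j : (0 < e j)%R by rewrite divr_gt0 // ltr0n expn_gt0.
have delta_gt0 j : (0 < delta j)%R by rewrite !divr_gt0 // ltr0n expn_gt0.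
have [N cutN] := choice (fun j => exists_cutoff j mA lamA_lty (e_gt0 j) (delta_gt0 j)).
pose U j := A `&` [set x | (e j)%:E < tail (N j) x].
have mU j : measurable (U j).
  by apply: emeasurable_fun_o_infty => //; exact: measurable_funS (measurable_tail _).
have mV : measurable (\bigcup_j U j) by exact: bigcupT_measurable.
have lamV : lam (\bigcup_j U j) <= (r / 2)%R%:E.
  apply: le_trans (measure_sigma_subadditive lam mU mV (@subset_refl _ _)) _.
  apply: le_trans (epsilon_trick0 xpredT _); last by rewrite divr_ge0 // ltW.
  by apply: lee_nneseries => j _ //; exact/ltW/(cutN j).1.
exists ((A `\` \bigcup_j U j) `|` range u), N; split.
- by apply: measurableU => //; exact: measurableD.
- apply: lt_le_trans (le_measure _ _ _ (@subsetUl _ _ (range u))); rewrite ?inE;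
    last 2 first.
  + exact: measurableD.
  + by apply: measurableU => //; exact: measurableD.
  apply: measureD_gt0 => //; apply: le_lt_trans lamV _.
  by rewrite lamAE lte_fin ltr_pdivrMr // ltr_pMr // ltr1n.
- by move=> x rx; right.
move=> x [[Ax notUx]|[k _ <-]].
  exists 0%N => j _; rewrite leNgt; apply/negP => large; apply: notUx.
  by exists j.
by exists k => j kj; exact: (cutN j).2.
Qed.

Lemma exists_weights (A : set T) :
  measurable A -> 0 < lam A -> lam A < +oo -> measurable (range u) ->
  exists (B : set T) (K : nat -> nat),
    [/\ measurable B /\ 0 < lam B, range u `<=` B, (forall n, (0 < K n)%N),
        (((K n)%:R : R) @[n --> \oo] --> +oo)%R &
        forall x, B x -> \sum_(0 <= n <oo) (K n)%:R%:E * a n x < +oo].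
Proof.
move=> mA lamA_gt0 lamA_lty mrange.
have [B [N [mB lamB rangeB smallB]]] := exists_cutoffs mA lamA_gt0 lamA_lty mrange.
exists B, (fun n => (passed_cutoffs N n).+1); split => //.
  apply/cvgrnyP/cvgnyPge => M.
  have /cvgrnyP/cvgnyPge/(_ M) := passed_cutoffs_cvgy (R := R) N.
  by apply: filterS => n /leqW.
by move=> x /smallB; exact: nneseries_passed_cutoffs_lty.
Qed.

End cutoffs.

Lemma left_Haar_finite_positive_set (R : realType) (G : ptopologicalType)
    (mul : G -> G -> G) (lam : {measure set (borelT G) -> \bar R}) :
  locally_compact [set: G] -> left_Haar mul lam ->
  exists K : set (borelT G), [/\ measurable K, (0 < lam K)%E & (lam K < +oo)%E].
Proof.
move=> lcG [_ lam_compact lam_open]; have [K nK [cK clK]] := lcG point I.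
rewrite withinET nbhsE in nK; have [V [oV Vpoint] VK] := nK.
have mK : measurable (K : set (borelT G)) by exact: closed_borel_measurable.
exists K; split => //; last exact: lam_compact.
apply: lt_le_trans (le_measure _ (mem_set (open_borel_measurable oV)) (mem_set mK) VK).
by apply: lam_open => //; exists point.
Qed.

Section cocycle_preimage.
Context (G X H : ptopologicalType) (c : G -> X -> H) (B : set (borelT H)).
Hypothesis mc :
  measurable_fun setT (fun p : borelT G * borelT X => (c p.1 p.2 : borelT H)).
Hypothesis mB : measurable B.

Let level : set (borelT G * borelT X) := (fun p => c p.1 p.2) @^-1` B.

Let measurable_level : measurable level.
Proof. by rewrite -[level]setTI; exact: mc. Qed.

Let xsection_level g : xsection level g = [set x | B (c g x)].
Proof. by apply/seteqP; split => x; rewrite /xsection /= inE. Qed.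

Lemma measurable_cocycle_preimage g : measurable ([set x | B (c g x)] : set (borelT X)).
Proof. by rewrite -xsection_level; exact: measurable_xsection. Qed.

Lemma measurable_fun_measure_cocycle_preimage (R : realType)
    (nu : {sigma_finite_measure set (borelT X) -> \bar R}) :
  measurable_fun setT (fun g : borelT G => nu [set x | B (c g x)]).
Proof.
rewrite (_ : (fun g => _) = fun g => nu (xsection level g)).
  exact: measurable_fun_xsection.
by apply/funext => g; rewrite xsection_level.
Qed.

End cocycle_preimage.

Unset Implicit Arguments.

Theorem mainTheorem15 (R : realType)
  (G : ptopologicalType) (mulG : G -> G -> G) (invG : G -> G) (eG : G)
  (hG : lcsc_cg_group mulG invG eG)
  (lam : {measure set (borelT G) -> \bar R}) (hlam : left_Haar mulG lam)
  (H : ptopologicalType) (mulH : H -> H -> H) (invH : H -> H) (eH : H)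
  (hH : lcsc_cg_group mulH invH eH)
  (SH : set H) (hSH : compact SH /\ generates mulH invH eH SH)
  (phi : R -> R) (hphi : forall t, 0 <= t -> 0 <= phi t)
  (X : completePseudoMetricType R) (hX : polish_space X)
  (nu : probability (borelT X) R) (act : G -> X -> X)
  (hact : free_pmp_action mulG eG nu act)
  (c : G -> X -> H) (hc : cocycle mulG act mulH c)
  (hint : phi_integrable mulG invG eG nu mulH invH eH SH phi c) :
  exists (A : set (borelT G)) (K : nat -> nat),
    [/\ measurable A /\ (0 < lam A)%E,
        exists D : set G, countable D /\ dense D /\ D `<=` A,
        (forall n, (0 < n)%N -> (0 < K n)%N),
        (fun n => (K n)%:R : R) @ \oo --> +oo &
        forall g : G, A g ->
          (\sum_(1 <= n <oo)
             (((K n)%:R * phi n%:R)%:E *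
              nu [set x | word_length mulH invH eH SH (c g x) = n]) < +oo)%E].
Proof.
have [_ [_ [_ [hausG [lcG [scG _]]]]]] := hG.
pose wl := word_length mulH invH eH SH.
have mlevel n : measurable ([set h | wl h = n] : set (borelT H)).
  exact: measurable_word_length_eq hH hSH.1 hSH.2.
pose a n (g : borelT G) := ((phi n%:R)%:E * nu [set x | wl (c g x) = n])%E.
have a_ge0 n g : (0 <= a n g)%E by rewrite mule_ge0 ?lee_fin ?hphi.
have a_meas n : measurable_fun setT (a n).
  apply: measurable_funeM; exact: (measurable_fun_measure_cocycle_preimage hc.1 (mlevel n)).
have a_fin g : (\sum_(0 <= n <oo) a n g < +oo)%E.
  rewrite -(integral_comp_nat nu (w := fun x => wl (c g x)) (f := fun n => phi n%:R)).
  - exact: hint.2.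
  - by move=> n; rewrite hphi.
  - by move=> n; exact: (measurable_cocycle_preimage hc.1 (mlevel n) g).
have [K0 [mK0 lamK0_gt0 lamK0_lty]] := left_Haar_finite_positive_set lcG hlam.
have [u dense_u] := second_countable_dense_seq scG.
have [A [K [mA range_A K_gt0 K_cvg A_fin]]] := exists_weights a_ge0 a_meas a_fin
  mK0 lamK0_gt0 lamK0_lty (measurable_range_seq u hausG).
exists A, K; split => //.
  by exists (range u); split; [exact: card_image_le|split].
move=> g /A_fin; apply: le_lt_trans.
rewrite (@nneseries_recl _ xpredT) // => [|n _]; last by rewrite mule_ge0.
apply: le_trans (leeDr _ _); last by rewrite mule_ge0.
rewrite le_eqVlt; apply/orP; left; apply/eqP/eq_eseriesr => n _.
by rewrite /a EFinM muleA.
Qed.
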